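(* Let $G$ be a countable discrete group acting minimally by homeomorphisms on a compact Hausdorff space $X$, and fix $x\in X$. There is a net $(\mu_\lambda)\subseteq P_f(G,C(X))$ such that for every $\nu\in P(X)$, $\nu\mu_\lambda\to\delta_x$ in the weak* topology.
   Context: Minimal means every orbit is dense; $(g\cdot f)(y)=f(g^{-1}y)$ on $C(X)$. $P(X)$ is the set of regular Borel probability measures on $X$, identified with states on $C(X)$. A generalized $(G,C(X))$-probability measure is a formal sum $\mu=\sum_{i\in I}f_is_if_i$ with $I$ an index set, $s_i\in G$ (repetitions allowed), $f_i\in C(X)$, $f_i\ge0$, $f_i\ne0$, $\sum_if_i^2=1$; $P_f(G,C(X))$ is the set of these with $I$ finite. For $h\in C(X)$, $\mu h=\sum_if_i^2(s_i\cdot h)$, and $(\nu\mu)(h)=\nu(\mu h)$. *)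

From Stdlib Require List.
From HB Require Import structures.
From mathcomp Require Import all_boot all_order all_algebra.
From mathcomp Require Import all_classical all_reals all_analysis.
Import numFieldNormedType.Exports.
Set Implicit Arguments. Unset Strict Implicit. Unset Printing Implicit Defensive.
Import Order.TTheory GRing.Theory Num.Theory.
Local Open Scope ring_scope.
Local Open Scope classical_set_scope.

Definition is_group (G : Type) (mul : G -> G -> G) (one : G) (inv : G -> G) :=
  [/\ forall a b c, mul a (mul b c) = mul (mul a b) c,
      forall a, mul one a = a, forall a, mul a one = a,
      forall a, mul (inv a) a = one & forall a, mul a (inv a) = one].

(* A (left) action of G on X by homeomorphisms: each act g is continuous,
   act one = id, act (g h) = act g \o act h (hence act g has continuous
   inverse act (inv g)). *)
Definition is_action_by_homeos (G : Type) (mul : G -> G -> G) (one : G)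
  (X : topologicalType) (act : G -> X -> X) :=
  [/\ forall g, continuous (act g),
      forall y, act one y = y &
      forall g h y, act (mul g h) y = act g (act h y)].

Definition minimal_action (G : Type) (X : topologicalType) (act : G -> X -> X) :=
  forall y : X, closure [set act g y | g in [set: G]] = [set: X].

(* States on C(X) (real-valued continuous functions), identified with P(X). *)
Definition is_state (R : realType) (X : topologicalType) (phi : (X -> R) -> R) :=
  [/\ forall f g : X -> R, continuous f -> continuous g ->
        phi (fun y => f y + g y) = phi f + phi g,
      forall (a : R) (f : X -> R), continuous f -> phi (fun y => a * f y) = a * phi f,
      forall f : X -> R, continuous f -> (forall y, 0 <= f y) -> 0 <= phi f &
      phi (fun _ => 1) = 1].

(* A finitely supported generalized (G, C(X))-probability measure
   sum_i f_i s_i f_i, encoded as the finite list of pairs (s_i, f_i). *)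
Definition is_gen_prob_fin (R : realType) (G : Type) (X : topologicalType)
  (mu : seq (G * (X -> R))) :=
  [/\ forall p, List.In p mu -> continuous p.2,
      forall p, List.In p mu -> forall y, 0 <= p.2 y,
      forall p, List.In p mu -> exists y, p.2 y != 0 &
      forall y, \sum_(p <- mu) (p.2 y) ^+ 2 = 1].

(* mu h = sum_i f_i^2 (s_i . h), with (g . h)(y) = h (g^{-1} y). *)
Definition gen_apply (R : realType) (G : Type) (X : topologicalType)
  (inv : G -> G) (act : G -> X -> X) (mu : seq (G * (X -> R))) (h : X -> R)
  : X -> R :=
  fun y => \sum_(p <- mu) (p.2 y) ^+ 2 * h (act (inv p.1) y).

Definition directed (D : Type) (le : D -> D -> Prop) :=
  [/\ inhabited D, forall a, le a a,
      forall a b c, le a b -> le b c -> le a c &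
      forall a b, exists c, le a c /\ le b c].

(* The net is indexed by the open neighbourhoods U of x, ordered by reverse
   inclusion.  Given U, minimality yields for every y a group element g_y
   with g_y^-1 y in U, and Urysohn's lemma (X is normal) a bump phi_y with
   phi_y y = 1 vanishing off the open set of z with g_y^-1 z in U.  By
   compactness finitely many bumps cover X; dividing them by the square root
   of the sum of their squares gives mu_U = sum_y f_y g_y f_y in
   P_f(G, C(X)) all of whose translates g_y^-1 z (where f_y z <> 0) lie in U.
   Hence (mu_U h)(y) is a convex combination of values of h on U, so it is
   eps-close to h x once h(U) lies in the eps-ball around h x, and every
   state preserves such a uniform bound. *)

From HB Require Import structures.
From mathcomp Require Import all_boot all_order all_algebra.
From mathcomp Require Import all_classical all_reals all_analysis.
From mathcomp Require Import finmap.
Import numFieldNormedType.Exports.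
Import Order.TTheory GRing.Theory Num.Theory.
Local Open Scope ring_scope.
Local Open Scope classical_set_scope.

Lemma In_map_inv {A B : Type} {f : A -> B} {s : seq A} {b : B} :
  List.In b (map f s) -> exists a, List.In a s /\ b = f a.
Proof.
elim: s => //= a s IH [<-|/IH[a' [Ha' ->]]]; first by exists a; split; [left|].
by exists a'; split; [right|].
Qed.

Section FiniteSums.
Variable R : realType.

Lemma continuous_sum (X : topologicalType) (J : Type) (s : seq J)
    (F : J -> X -> R) :
  (forall j, List.In j s -> continuous (F j)) ->
  continuous (fun z => \sum_(j <- s) F j z).
Proof.
elim: s => [|a s IH] cF.
  by under eq_fun do rewrite big_nil; apply: cst_continuous.
under eq_fun do rewrite big_cons.
move=> z; apply: (cvgD (cF a (or_introl erefl) z)).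
by apply: IH => j Hj; apply: cF; right.
Qed.

Lemma ler_norm_sum_weighted (T : Type) (s : seq T) (F A : T -> R) (e : R) :
  (forall t, List.In t s -> `|F t| <= e * A t) ->
  `|\sum_(t <- s) F t| <= e * \sum_(t <- s) A t.
Proof.
elim: s => [|a s IH] H; first by rewrite !big_nil normr0 mulr0.
rewrite !big_cons mulrDr; apply: le_trans (ler_normD _ _) _.
apply: lerD; first by apply: H; left.
by apply: IH => t Ht; apply: H; right.
Qed.

End FiniteSums.

Section States.
Variables (R : realType) (X : topologicalType) (nu : (X -> R) -> R).
Hypothesis hnu : is_state nu.

Lemma state_const (a : R) : nu (fun _ => a) = a.
Proof.
case: hnu => _ hscale _ h1.
have -> : (fun _ : X => a) = (fun y => a * (fun _ : X => (1 : R)) y).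
  by apply: funext => y; rewrite mulr1.
by rewrite hscale ?h1 ?mulr1 //; apply: cst_continuous.
Qed.

Lemma state_norm_bound (k : X -> R) (c : R) :
  continuous k -> (forall y, `|k y| <= c) -> `|nu k| <= c.
Proof.
case: (hnu) => hadd hscale hpos _ ck hk.
have cc : continuous (fun _ : X => c) by apply: cst_continuous.
have cNk : continuous (fun y => (-1) * k y).
  by move=> z; apply: cvgM; [apply: cvg_cst | apply: ck].
have up : 0 <= nu (fun y => (fun _ => c) y + (fun y => (-1) * k y) y).
  apply: hpos => [z|y /=]; first by apply: cvgD; [apply: cc|apply: cNk].
  by rewrite mulN1r subr_ge0; apply: le_trans (ler_norm _) (hk y).
have low : 0 <= nu (fun y => (fun _ => c) y + k y).
  apply: hpos => [z|y /=]; first by apply: cvgD; [apply: cc|apply: ck].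
  by rewrite -lerBlDr sub0r; apply: le_trans (ler_norm _) _; rewrite normrN.
rewrite hadd // hscale // state_const mulN1r subr_ge0 in up.
rewrite hadd // state_const -lerBlDr sub0r lerNl in low.
by rewrite ler_norml up low.
Qed.

Lemma state_near (k : X -> R) (c e : R) :
  continuous k -> (forall y, `|k y - c| <= e) -> `|nu k - c| <= e.
Proof.
case: (hnu) => hadd _ _ _ ck hk.
have -> : nu k - c = nu (fun y => k y + (fun _ => - c) y).
  by rewrite hadd ?state_const //; apply: cst_continuous.
apply: state_norm_bound => // z.
by apply: cvgD; [apply: ck | apply: cst_continuous].
Qed.

End States.

(* Urysohn's lemma on a compact Hausdorff (hence normal) space. *)
Lemma urysohn (R : realType) (X : topologicalType) :
  hausdorff_space X -> compact [set: X] ->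
  forall A B : set X, closed A -> closed B -> A `&` B = set0 ->
  exists f : X -> R, [/\ continuous f, forall z, 0 <= f z <= 1,
     forall z, A z -> f z = 0 & forall z, B z -> f z = 1].
Proof.
move=> hT hX A B cA cB AB.
have /(@uniform_separatorP X R) [f [cf rf fA fB]] :=
  proj1 (@normal_separatorP R X) (compact_normal hT hX) A B cA cB AB.
exists f; split => // [z|z Az|z Bz]; [|exact: fA|exact: fB].
by have /= := rf (f z) (ex_intro2 _ _ z I erefl); rewrite in_itv.
Qed.

Section SquareNormalisation.
Context {R : realType} {X : topologicalType} {J : Type}.
Variables (s : seq J) (phi : J -> X -> R).

Definition sq_sum (z : X) : R := \sum_(j <- s) phi j z ^+ 2.

Hypothesis sq_sum_gt0 : forall z, 0 < sq_sum z.

Definition sq_normalise (j : J) (z : X) : R := phi j z / Num.sqrt (sq_sum z).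

Let sqrt_sq_sum_gt0 z : 0 < Num.sqrt (sq_sum z).
Proof. by rewrite sqrtr_gt0. Qed.

Lemma sq_normalise_continuous (j : J) :
  (forall i, continuous (phi i)) -> continuous (sq_normalise j).
Proof.
move=> cphi z.
have cS : continuous sq_sum.
  by apply: continuous_sum => i _ w; apply: cvgM; apply: cphi.
have csqrt : continuous (fun w => Num.sqrt (sq_sum w)).
  by move=> w; apply: continuous_comp (cS w) (@sqrt_continuous R (sq_sum w)).
exact: cvgM (cphi j z) (cvgV (lt0r_neq0 (sqrt_sq_sum_gt0 z)) (csqrt z)).
Qed.

Lemma sq_normalise_ge0 (j : J) (z : X) : 0 <= phi j z -> 0 <= sq_normalise j z.
Proof. by move=> ?; apply: divr_ge0 => //; apply: ltW. Qed.

Lemma sq_normalise_eq0 (j : J) (z : X) :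
  (sq_normalise j z == 0) = (phi j z == 0).
Proof. by rewrite mulf_eq0 invr_eq0 (gt_eqF (sqrt_sq_sum_gt0 z)) orbF. Qed.

Lemma sq_normalise_sum (z : X) : \sum_(j <- s) sq_normalise j z ^+ 2 = 1.
Proof.
have S0 : 0 <= sq_sum z := ltW (sq_sum_gt0 z).
under eq_bigr do rewrite /sq_normalise expr_div_n (sqr_sqrtr S0).
by rewrite -mulr_suml -/(sq_sum z) divff // lt0r_neq0.
Qed.

End SquareNormalisation.

Definition translates_into {R : realType} {G : Type} {X : topologicalType}
    (inv : G -> G) (act : G -> X -> X) (mu : seq (G * (X -> R))) (U : set X) :=
  forall p, List.In p mu -> forall y, p.2 y != 0 -> U (act (inv p.1) y).

Section GenApply.
Variables (R : realType) (G : Type) (X : topologicalType).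
Variables (inv : G -> G) (act : G -> X -> X).

Lemma gen_apply_continuous (mu : seq (G * (X -> R))) (h : X -> R) :
  (forall g, continuous (act g)) -> (forall p, List.In p mu -> continuous p.2) ->
  continuous h -> continuous (gen_apply inv act mu h).
Proof.
move=> cact cf ch; apply: continuous_sum => p Hp z.
apply: cvgM; first by apply: cvgM; apply: cf.
by apply: continuous_comp; [apply: cact | apply: ch].
Qed.

(* Since sum_i f_i^2 = 1, (mu h)(y) is a convex combination of the values of
   h at the translates of y, so it inherits any bound valid at those points. *)
Lemma gen_apply_near (mu : seq (G * (X -> R))) (h : X -> R) (c e : R) :
  (forall y, \sum_(p <- mu) p.2 y ^+ 2 = 1) ->
  (forall p y, List.In p mu -> p.2 y != 0 -> `|h (act (inv p.1) y) - c| <= e) ->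
  forall y, `|gen_apply inv act mu h y - c| <= e.
Proof.
move=> sum1 near y; rewrite /gen_apply.
rewrite -[c]mul1r -(sum1 y) mulr_suml -sumrB -[e]mulr1 -(sum1 y).
apply: ler_norm_sum_weighted => p Hp.
rewrite -mulrBr normrM ger0_norm ?sqr_ge0 // mulrC.
have [->|nz] := eqVneq (p.2 y) 0; first by rewrite expr0n /= !mulr0.
by apply: ler_wpM2r; [rewrite sqr_ge0 | apply: near].
Qed.

End GenApply.

Section MinimalAction.
Context {R : realType} {G : Type} {mul : G -> G -> G} {one : G} {inv : G -> G}.
Context {X : topologicalType} {act : G -> X -> X}.
Hypotheses (hG : is_group mul one inv) (hact : is_action_by_homeos mul one act).
Hypothesis hmin : minimal_action act.
Hypotheses (hX : compact [set: X]) (hT : hausdorff_space X).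

Let inv_inv (a : G) : inv (inv a) = a.
Proof.
case: hG => assoc mul1 mulr1 mulVg _.
by rewrite -[inv (inv a)]mulr1 -(mulVg a) assoc mulVg mul1.
Qed.

Lemma orbit_meets_open {U : set X} :
  open U -> U !=set0 -> forall y, exists g, U (act (inv g) y).
Proof.
move=> oU [u Uu] y.
have : closure [set act g y | g in [set: G]] u by rewrite hmin.
move=> /(_ U (open_nbhs_nbhs (conj oU Uu))) [z [[g _ <-] Uz]].
by exists (inv g); rewrite inv_inv.
Qed.

Lemma bump_into_open {U : set X} : open U -> U !=set0 -> forall y,
  exists (g : G) (phi : X -> R), [/\ continuous phi, forall z, 0 <= phi z,
    phi y = 1 & forall z, phi z != 0 -> U (act (inv g) z)].
Proof.
move=> oU U0 y; have [g Ugy] := orbit_meets_open oU U0 y.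
have [cact _ _] := hact.
pose W := act (inv g) @^-1` U.
have oW : open W := open_comp (fun z _ => cact (inv g) z) oU.
have [|||phi [cphi phi01 phi0 phi1]] := @urysohn R X hT hX (~` W) [set y].
- exact: open_closedC.
- by apply: accessible_closed_set1; apply: hausdorff_accessible.
- by rewrite -subset0 => z [nWz zy]; apply: nWz; rewrite zy.
exists g, phi; split => // [z||z].
- by case/andP: (phi01 z).
- by apply: phi1.
- by move=> nz; apply: contrapT => nWz; move: nz; rewrite phi0 ?eqxx.
Qed.

Lemma gen_prob_into_open {U : set X} : open U -> U !=set0 ->
  exists mu : seq (G * (X -> R)), is_gen_prob_fin mu /\ translates_into inv act mu U.
Proof.
move=> oU U0.
have [g Hg] := choice (bump_into_open oU U0).
have [phi Hphi] := choice Hg.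
have cphi y : continuous (phi y) by case: (Hphi y).
have phi_ge0 y z : 0 <= phi y z by case: (Hphi y).
have phi1 y : phi y y = 1 by case: (Hphi y).
have phi_into y z : phi y z != 0 -> U (act (inv (g y)) z).
  by case: (Hphi y) => _ _ _; apply.
pose O y := phi y @^-1` [set r | 0 < r].
have oO y : open (O y) := open_comp (fun z _ => cphi y z) (@open_gt R 0).
have cov : [set: X] `<=` cover [set: X] O.
  by move=> z _; exists z => //; rewrite /O /= phi1 ltr01.
have [u _] := U0.
pose XP : ptopologicalType := HB.pack X (@isPointed.Build X u).
have hXP : @cover_compact XP [set: XP] by rewrite -compact_cover.
have [D _ HD] := hXP X setT O (fun i _ => oO i) cov.
pose s := enum_fset D.
have sq_gt0 z : 0 < sq_sum s phi z.
  have [y Dy Oyz] := HD z I.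
  rewrite lt0r sumr_ge0 ?andbT => [|j _]; last exact: sqr_ge0.
  rewrite psumr_neq0 => [|j _]; last exact: sqr_ge0.
  by apply/hasP; exists y => //; rewrite exprn_gt0.
exists [seq (g y, sq_normalise s phi y) | y <- s]; split; first split.
- by move=> p /In_map_inv [y [_ ->]]; apply: sq_normalise_continuous.
- by move=> p /In_map_inv [y [_ ->]] z; apply: sq_normalise_ge0.
- move=> p /In_map_inv [y [_ ->]]; exists y.
  by rewrite /= sq_normalise_eq0 // phi1 oner_neq0.
- by move=> z; rewrite big_map; apply: sq_normalise_sum.
- move=> p /In_map_inv [y [_ ->]] z /=.
  by rewrite sq_normalise_eq0 //; apply: phi_into.
Qed.

End MinimalAction.

Definition open_nbhd {X : topologicalType} (x : X) := {U : set X | open U /\ U x}.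

Lemma open_nbhd_directed (X : topologicalType) (x : X) :
  directed (fun U V : open_nbhd x => sval V `<=` sval U).
Proof.
split.
- by constructor; exists setT; split; [exact: openT|].
- by move=> U z.
- by move=> U V W UV VW; apply: subset_trans VW UV.
- move=> [U [oU Ux]] [V [oV Vx]].
  by exists (exist _ (U `&` V) (conj (openI oU oV) (conj Ux Vx))); split => /= z [].
Qed.

Theorem mainTheorem11 (R : realType) (G : countType)
  (mul : G -> G -> G) (one : G) (inv : G -> G)
  (X : topologicalType) (act : G -> X -> X)
  (hG : is_group mul one inv)
  (hX : compact [set: X]) (hT : hausdorff_space X)
  (hact : is_action_by_homeos mul one act)
  (hmin : minimal_action act)
  (x : X) :
  exists (D : Type) (le : D -> D -> Prop) (mu : D -> seq (G * (X -> R))),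
    directed le /\
    (forall l, is_gen_prob_fin (mu l)) /\
    forall nu : (X -> R) -> R, is_state nu ->
    forall h : X -> R, continuous h ->
    forall eps : R, 0 < eps ->
    exists l0, forall l, le l0 l ->
      `| nu (gen_apply inv act (mu l) h) - h x | < eps.
Proof.
have [cact _ _] := hact.
have mu_ex (U : open_nbhd x) : exists mu : seq (G * (X -> R)),
    is_gen_prob_fin mu /\ translates_into inv act mu (sval U).
  case: U => U [oU Ux]; apply: (gen_prob_into_open hG hact hmin hX hT oU).
  by exists x.
have [mu Hmu] := choice mu_ex.
exists (open_nbhd x), (fun U V => sval V `<=` sval U), mu.
split; first exact: open_nbhd_directed.
split=> [U|nu hnu h ch eps eps0]; first by case: (Hmu U).
have e2 : 0 < eps / 2 by rewrite divr_gt0.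
pose U0 := h @^-1` ball (h x) (eps / 2).
have oU0 : open U0 := open_comp (fun z _ => ch z) (ball_open (h x) (eps / 2)).
exists (exist _ U0 (conj oU0 (ballxx _ e2))) => U /= U_U0.
have [[cf _ _ sum1] into] := Hmu U.
apply: (@le_lt_trans _ _ (eps / 2)); last by rewrite ltr_pdivrMr // ltr_pMr // ltr1n.
apply: state_near => //; first exact: gen_apply_continuous.
apply: gen_apply_near => // p y Hp nz.
by rewrite distrC ltW //; apply: U_U0; apply: into.
Qed.
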